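(* For a positive integer $r$ and complex numbers $e_1,\ldots,e_r$, define the rational function $\Phi_{e_1,\ldots,e_r}(x)$ recursively by $\Phi_{e_1}(x)=\frac{1}{e_1-x}$ and $\Phi_{e_1,\ldots,e_r}(x)=\frac{1}{e_r-\Phi_{e_1,\ldots,e_{r-1}}(x)}$ for $r\ge 2$, i.e. $$\Phi_{e_1,\ldots,e_r}(x)=\cfrac{1}{e_r-\cfrac{1}{e_{r-1}-\cfrac{1}{\cdots-\cfrac{1}{e_{2}-\cfrac{1}{e_1-x}}}}}.$$ Let $r$ be a positive integer and let $e_1,\ldots,e_r$ be integers. Suppose that for every permutation $s$ of $\{1,\ldots,r\}$ one has $\Phi_{e_{s(1)},\ldots,e_{s(r)}}(x)=x$ as rational functions. Then $e_1=\cdots=e_r$, and $e_1\in\{-1,0,1\}$. *)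

From mathcomp Require Import all_boot all_order all_algebra all_field.
Set Implicit Arguments. Unset Strict Implicit. Unset Printing Implicit Defensive.
Import GRing.Theory Num.Theory.
Local Open Scope ring_scope.

Definition ratfun := {fraction {poly algC}}.

Definition ratX : ratfun := tofrac ('X : {poly algC}).

Definition ratcst (e : int) : ratfun := tofrac (e%:~R : {poly algC}).

Definition Phi (es : seq int) : ratfun :=
  foldl (fun acc e => (ratcst e - acc)^-1) ratX es.

From mathcomp Require Import all_boot all_order all_algebra all_fingroup all_field.
From mathcomp Require Import zify ring.
Import GRing.Theory Num.Theory.
Local Open Scope ring_scope.

(* Each step acc |-> 1/(e - acc) is the Moebius map of the unimodular matrix
   [[0, 1], [-1, e]], so Phi_{e_1..e_r} = (a x + b)/(c x + d) for an integral
   matrix of determinant 1, and Phi = x forces this matrix to be +-1.  If the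
   two last entries x, y of a sequence can be swapped without changing this,
   comparing the two products gives (x - y) d = 0 with d = +-1; as any two
   entries can be moved to the end by a permutation, they are all equal.
   For a constant sequence e, ..., e the off-diagonal entry is the
   Chebyshev-type number U_r(e) with U_(k+2) = e U_(k+1) - U_k, and |U_k| is
   strictly increasing when |e| >= 2. *)

Definition moeb_step (m : int * int * int * int) (e : int) :=
  let '(a, b, c, d) := m in (c, d, e * c - a, e * d - b).

Definition moeb (es : seq int) := foldl moeb_step (1, 0, 0, 1) es.

Lemma moeb_rcons es e : moeb (rcons es e) = moeb_step (moeb es) e.
Proof. by rewrite /moeb foldl_rcons. Qed.

Lemma Phi_rcons es e : Phi (rcons es e) = (ratcst e - Phi es)^-1.
Proof. by rewrite /Phi foldl_rcons. Qed.

Lemma moeb_det es : let '(a, b, c, d) := moeb es in a * d - b * c = 1.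
Proof.
elim/last_ind: es => [//|es e IH]; rewrite moeb_rcons.
by case: (moeb es) IH => [[[a b] c] d] /= <-; ring.
Qed.

Definition lin (c d : int) : {poly algC} := c%:~R%:P * 'X + d%:~R%:P.

Lemma coef_lin c d i : (lin c d)`_i = [:: d%:~R; c%:~R]`_i.
Proof.
by rewrite /lin !coefE; case: i => [|[|i]] /=;
  rewrite ?mulr0 ?mulr1 ?add0r ?addr0 ?nth_nil.
Qed.

Lemma lin_neq0 a b c d : a * d - b * c = 1 -> lin c d != 0.
Proof.
move=> det1; apply/eqP => lin0; move: det1.
have := coef_lin c d 0; have := coef_lin c d 1; rewrite lin0 !coef0 /=.
by move=> /esym/eqP + /esym/eqP; rewrite !intr_eq0 => /eqP -> /eqP ->; lia.
Qed.

Lemma lin_step a b c d e : lin (e * c - a) (e * d - b) = e%:~R * lin c d - lin a b.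
Proof. by rewrite /lin !(intrB, intrM, polyCB, polyCM) rmorph_int; ring. Qed.

Lemma invf_subr_div (F : fieldType) (x p q : F) :
  q != 0 -> (x - p / q)^-1 = q / (x * q - p).
Proof. by move=> q0; rewrite -[q / _]invf_div mulrBl mulfK. Qed.

Lemma Phi_moeb es : let '(a, b, c, d) := moeb es in
  Phi es = tofrac (lin a b) / tofrac (lin c d).
Proof.
elim/last_ind: es => [|es e IH].
  by rewrite /Phi /moeb /= /lin !(mulr1z, mulr0z) polyC0 polyC1 mul1r mul0r
    addr0 add0r tofrac1 divr1.
rewrite moeb_rcons Phi_rcons; have := moeb_det es.
case: (moeb es) IH => [[[a b] c] d] /= -> /lin_neq0 lin_cd_neq0.
by rewrite invf_subr_div ?tofrac_eq0 // lin_step tofracB tofracM.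
Qed.

Lemma moeb_id es : Phi es = ratX ->
  let '(a, b, c, d) := moeb es in b = 0 /\ c = 0 /\ a = d.
Proof.
have := Phi_moeb es; have := moeb_det es.
case: (moeb es) => [[[a b] c] d] /= /lin_neq0 lin_cd_neq0 -> PhiX.
have /eqP : tofrac (lin a b) = tofrac ('X * lin c d).
  by rewrite tofracM -/ratX -PhiX divfK ?tofrac_eq0.
rewrite tofrac_eq => /eqP lin_ab.
have coef_ab i : [:: b%:~R; a%:~R]`_i =
    if i == 0%N then 0 else [:: d%:~R; c%:~R]`_i.-1 :> algC.
  by rewrite -!coef_lin lin_ab coefXM.
have := coef_ab 0%N; have := coef_ab 1%N; have := coef_ab 2%N => /=.
move=> /esym/eqP; rewrite intr_eq0 => /eqP -> /intr_inj -> /eqP.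
by rewrite intr_eq0 => /eqP ->.
Qed.

Lemma Phi_swap_last es x y :
  Phi (es ++ [:: x; y]) = ratX -> Phi (es ++ [:: y; x]) = ratX -> x = y.
Proof.
have rcons2 u v : es ++ [:: u; v] = rcons (rcons es u) v by rewrite -!cats1 -catA.
rewrite !rcons2 => /moeb_id + /moeb_id; rewrite !moeb_rcons; have := moeb_det es.
case: (moeb es) => [[[a b] c] d] /= det1 [bxy _] [byx _].
have d_neq0 : d != 0 by apply: contra_eq_neq det1 => d0; move: bxy; rewrite d0; lia.
by apply: (mulIf d_neq0); lia.
Qed.

Fixpoint cheb (e : int) (k : nat) : int :=
  match k with
  | 0 => 0
  | 1 => 1
  | (k'.+1 as k1).+1 => e * cheb e k1 - cheb e k'
  end.

Lemma chebSS e k : cheb e k.+2 = e * cheb e k.+1 - cheb e k.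
Proof. by []. Qed.

Lemma moeb_nseq e n :
  moeb (nseq n.+1 e) = (- cheb e n, cheb e n.+1, - cheb e n.+1, cheb e n.+2).
Proof.
elim: n => [|n IH]; first by rewrite /moeb /= mulr0 mulr1 sub0r subr0.
have -> : nseq n.+2 e = rcons (nseq n.+1 e) e.
  by rewrite -cats1 -[[:: e]]/(nseq 1 e) -nseqD addn1.
rewrite moeb_rcons IH; cbv [moeb_step]; rewrite !chebSS.
by congr (_, _, _, _); ring.
Qed.

Lemma cheb_norm_lt e k : 2 <= `|e| -> `|cheb e k| < `|cheb e k.+1|.
Proof.
move=> e_ge2; elim: k => [//|k IH]; rewrite chebSS.
have := lerB_dist (e * cheb e k.+1) (cheb e k); rewrite normrM.
nia.
Qed.

Lemma Phi_nseq_id e n : Phi (nseq n.+1 e) = ratX -> e = -1 \/ e = 0 \/ e = 1.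
Proof.
move/moeb_id; rewrite moeb_nseq => -[_ [cheb_eq0 _]].
have := @cheb_norm_lt e n; lia.
Qed.

Lemma Phi_perm_id_const {s : seq int} :
  (forall t, perm_eq t s -> Phi t = ratX) -> {in s &, forall x y, x = y}.
Proof.
move=> Phi_perm x y xs ys; case: (eqVneq x y) => // x_neq_y.
have perm_xy : perm_eq (rem y (rem x s) ++ [:: x; y]) s.
  rewrite perm_catC perm_sym (permPl (perm_to_rem xs)) perm_cons.
  by rewrite perm_to_rem // rem_mem // eq_sym.
have perm_yx : perm_eq (rem y (rem x s) ++ [:: y; x]) s.
  by rewrite -(permPr perm_xy) perm_cat2l (perm_catC [:: y]).
exact: Phi_swap_last (Phi_perm _ perm_xy) (Phi_perm _ perm_yx).
Qed.

Theorem lemma2p5 (r : nat) (hr : (0 < r)%N) (e : 'I_r -> int) :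
  (forall s : 'S_r, Phi [seq e (s i) | i <- enum 'I_r] = ratX) ->
  (forall i j : 'I_r, e i = e j) /\
  (forall i : 'I_r, e i = -1 \/ e i = 0 \/ e i = 1).
Proof.
move=> Phi_S.
have Phi_perm t : perm_eq t [seq e i | i <- enum 'I_r] -> Phi t = ratX.
  case/(tuple_permP (t := [tuple e i | i < r])) => p ->; rewrite -(Phi_S p) /=.
  by congr Phi; apply: eq_map => i; rewrite tnth_mktuple.
have e_const i j : e i = e j.
  by apply: (Phi_perm_id_const Phi_perm); rewrite map_f ?mem_enum.
split=> // i; apply: (@Phi_nseq_id _ r.-1); rewrite prednK //.
have -> : nseq r (e i) = [seq e k | k <- enum 'I_r].
  rewrite -[in nseq r _](size_enum_ord r) -(size_map e).
  by apply/esym/all_pred1P/allP => _ /mapP[j _ ->]; apply/eqP/e_const.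
exact: Phi_perm (perm_refl _).
Qed.
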